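(* Let $m\ge2$ and let $p\in S_m$ be indecomposable and avoid the pattern $321$. Let $\lambda$ be the number of left-to-right maxima of $p$ (i.e. the number of indices $j$ such that $p_i<p_j$ for all $i<j$). Let $n\ge2$ and let $\omega\in\widetilde{S}_n$ avoid $p$. Then $\left\lfloor |\omega_\beta-\omega_\alpha|/n\right\rfloor\le m^{\lambda+1}+1$ for all $1\le\alpha<\beta\le n$, and consequently $\ell(\omega)\le\left(m^{\lambda+1}+2\right)\binom{n}{2}$.
   Context: For $n\ge 2$, the affine symmetric group $\widetilde{S}_n$ is the set of bijections $\omega:\mathbb{Z}\to\mathbb{Z}$ such that $\omega(i+n)=\omega(i)+n$ for all $i\in\mathbb{Z}$ and $\sum_{i=1}^n\omega(i)=\binom{n+1}{2}$; write $\omega_i=\omega(i)$. The length $\ell(\omega)$ is the number of pairs $(i,j)$ of integers with $1\le i\le n$, $i<j$, and $\omega_i>\omega_j$. For $p\in S_k$, $\omega$ contains $p$ if there exist integers $i_1<\cdots<i_k$ such that $\omega_{i_1}\cdots\omega_{i_k}$ has the same relative order as $p_1\cdots p_k$; otherwise $\omega$ avoids $p$. A permutation $p\in S_m$ is decomposable if there exists $1\le j\le m-1$ with $\{p_1,\dots,p_j\}=\{1,\dots,j\}$, and indecomposable otherwise. *)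

From HB Require Import structures.
From mathcomp Require Import all_boot all_order all_algebra perm.
Set Implicit Arguments. Unset Strict Implicit. Unset Printing Implicit Defensive.
Import Order.TTheory GRing.Theory Num.Theory.

Definition affine_perm (n : nat) (w : int -> int) : Prop :=
  [/\ bijective w,
      (forall i : int, w (i + (Posz n))%R = (w i + (Posz n))%R) &
      (\sum_(1 <= i < n.+1) w (Posz i))%R = (Posz 'C(n.+1, 2))].

(* w contains the pattern p : 'S_k  (positions and values of p are 0-indexed,
   which does not affect relative order). *)
Definition aff_contains (k : nat) (p : 'S_k) (w : int -> int) : Prop :=
  exists f : 'I_k -> int,
    (forall a b : 'I_k, (a < b)%N -> (f a < f b)%R) /\
    (forall a b : 'I_k, (w (f a) < w (f b))%R = (p a < p b)%N).

Definition aff_avoids (k : nat) (p : 'S_k) (w : int -> int) : Prop :=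
  ~ aff_contains p w.

Definition avoids321 (m : nat) (p : 'S_m) : Prop :=
  ~ exists i j k : 'I_m,
      [/\ (i < j)%N, (j < k)%N, (p j < p i)%N & (p k < p j)%N].

(* decomposable: exists 1 <= j <= m-1 with {p_1..p_j} = {1..j}
   (0-indexed: positions and values < j) *)
Definition decomposable (m : nat) (p : 'S_m) : Prop :=
  exists j : nat, [/\ (0 < j)%N, (j < m)%N &
    [set p i | i in [set i : 'I_m | (i < j)%N]] = [set v : 'I_m | (v < j)%N]].

Definition indecomposable (m : nat) (p : 'S_m) : Prop := ~ decomposable p.

Definition ltr_maxima (m : nat) (p : 'S_m) : nat :=
  #|[set j : 'I_m | [forall i : 'I_m, (i < j)%N ==> (p i < p j)%N]]|.

(* Inversions (i,j) with 1 <= i <= n, i < j <= N; since j > i >= 1, j ranges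
   over positive integers. The length l(w) is the number of all such pairs
   with no upper bound on j, i.e. the supremum over N of this count. *)
Definition inv_upto (n : nat) (w : int -> int) (N : nat) : nat :=
  \sum_(1 <= i < n.+1) \sum_(i.+1 <= j < N.+1) ((w (Posz j)) < (w (Posz i)))%R.

Definition length_le (n : nat) (w : int -> int) (K : nat) : Prop :=
  forall N : nat, (inv_upto n w N <= K)%N.

From HB Require Import structures.
From mathcomp Require Import all_boot all_order all_algebra perm zify ring.
Import Order.TTheory GRing.Theory Num.Theory.

Set Implicit Arguments.
Unset Strict Implicit.
Unset Printing Implicit Defensive.

(* Suppose |w_b - w_a| >= m^(λ+1) n for some 1 <= a < b <= n.  Up to a
   translation by n the jump goes upwards, from L to L + d (0 < d < n), by
   D n + r with D >= m^(λ+1).  Put the left-to-right maxima of p at positions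
   L + d + t n and the other entries at positions L + t n, with offsets t
   increasing along p.  As p avoids 321, every other entry lies below all later
   entries, so each comparison is decided by the offsets, and these can be
   chosen greedily: a maximum y is preceded by a gap (m + 2) 2^k, k the number
   of later maxima, and a non-maximum x is placed more than D beyond every
   earlier maximum below it; the halving gaps keep x within D of every earlier
   maximum above it.  The length bound follows by counting, for each pair of
   residues mod n, the translates forming an inversion. *)

Section LeftToRightMaxima.

Variable q : nat -> nat.

Definition ltr_max (i : nat) : bool := all (fun j => q j < q i) (iota 0 i).

Lemma ltr_max_gt i j : ltr_max j -> i < j -> q i < q j.
Proof. by move=> /allP max_j lt_ij; apply: max_j; rewrite mem_iota. Qed.

Lemma ltr_max_ltn i j : ltr_max i -> q i < q j -> i < j.
Proof.
move=> max_i lt_q; case: ltngtP => // [lt_ji | eq_ij].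
  by move: (ltr_max_gt max_i lt_ji); rewrite ltnNge ltnW.
by move: lt_q; rewrite eq_ij ltnn.
Qed.

Variable m : nat.
Hypothesis q_inj : forall i j, i < m -> j < m -> q i = q j -> i = j.
Hypothesis q_avoids321 : forall i j k, i < j -> j < k -> k < m -> ~~ (q k < q j < q i).

Lemma nonmax_lt_later i j : ~~ ltr_max i -> i < j -> j < m -> q i < q j.
Proof.
move=> /allPn[k]; rewrite mem_iota add0n => /andP[_ lt_ki].
rewrite -leqNgt => le_qik lt_ij lt_jm.
have [lt_im lt_km] : i < m /\ k < m by lia.
have lt_qik : q i < q k.
  rewrite ltn_neqAle le_qik andbT; apply/eqP => /(q_inj lt_im lt_km) eq_ik.
  by move: lt_ki; rewrite eq_ik ltnn.
case: ltngtP => // [lt_qji | /(q_inj lt_im lt_jm) eq_ij].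
  by move: (q_avoids321 lt_ki lt_ij lt_jm); rewrite lt_qji lt_qik.
by move: lt_ij; rewrite eq_ij ltnn.
Qed.

Lemma nonmax_ltn i j : ~~ ltr_max j -> i < m -> q i < q j -> i < j.
Proof.
move=> nmax_j lt_im lt_q; rewrite ltnNge leq_eqVlt negb_or; apply/andP; split.
  by apply: contraTneq lt_q => ->; rewrite ltnn.
by apply: contraTN lt_q => lt_ji; rewrite -leqNgt ltnW // nonmax_lt_later.
Qed.

End LeftToRightMaxima.

Section Schedule.

Variables (m : nat) (q : nat -> nat) (D : nat).

Local Notation ltr_max := (ltr_max q).

Definition maxima_after (i : nat) : nat := count ltr_max (iota i.+1 (m - i.+1)).

Definition max_gap (i : nat) : nat := (m + 2) * 2 ^ maxima_after i.

Definition offset_step (s : seq nat) (i : nat) : nat :=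
  if ltr_max i then last 0 s + max_gap i
  else maxn (last 0 s).+1
         (\max_(u < i | ltr_max u && (q u < q i)) (nth 0 s u + D + 1)).

(* offsets i = [:: offset 0; ...; offset i.-1], so that each step may refer
   to all earlier offsets. *)
Fixpoint offsets (i : nat) : seq nat :=
  if i is i'.+1 then rcons (offsets i') (offset_step (offsets i') i') else [::].

Definition offset (i : nat) : nat := last 0 (offsets i.+1).

Lemma size_offsets i : size (offsets i) = i.
Proof. by elim: i => //= i IHi; rewrite size_rcons IHi. Qed.

Lemma nth_offsets i u : u < i -> nth 0 (offsets i) u = offset u.
Proof.
elim: i => // i IHi; rewrite ltnS leq_eqVlt => /orP[/eqP-> | lt_ui] /=.
  by rewrite nth_rcons size_offsets ltnn eqxx /offset /= last_rcons.
by rewrite nth_rcons size_offsets lt_ui IHi.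
Qed.

Lemma offsetE i : offset i =
  if ltr_max i then (if i is i'.+1 then offset i' else 0) + max_gap i
  else maxn (if i is i'.+1 then offset i' else 0).+1
         (\max_(u < i | ltr_max u && (q u < q i)) (offset u + D + 1)).
Proof.
have last_offsets : last 0 (offsets i) = if i is i'.+1 then offset i' else 0 by case: i.
rewrite /offset /= last_rcons /offset_step last_offsets; case: ifP => // _.
by congr maxn; apply: eq_bigr => u _; rewrite nth_offsets.
Qed.

Lemma max_gap_ge i : m + 2 <= max_gap i.
Proof. by rewrite /max_gap leq_pmulr ?expn_gt0. Qed.

Lemma offset_ltS i : offset i < offset i.+1.
Proof.
rewrite [offset i.+1]offsetE; case: ifP => _; last by rewrite leq_max leqnn.
by have := max_gap_ge i.+1; lia.
Qed.

Lemma offset_lt : {homo offset : i j / i < j}.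
Proof. exact: homo_ltn ltn_trans offset_ltS. Qed.

Lemma offset_le : {homo offset : i j / i <= j}.
Proof. exact: homo_leq leqnn leq_trans (fun i => ltnW (offset_ltS i)). Qed.

Lemma offset_ltr_max u y : ltr_max y -> u < y -> offset u + max_gap y <= offset y.
Proof.
case: y => // y max_y lt_uy.
by rewrite [offset y.+1]offsetE max_y leq_add2r offset_le.
Qed.

Lemma max_gapS i : i.+1 < m -> max_gap i = max_gap i.+1 * 2 ^ ltr_max i.+1.
Proof.
move=> lt_im; rewrite /max_gap -mulnA -expnD /maxima_after.
have -> : m - i.+1 = (m - i.+2).+1 by lia.
by rewrite /= [_ + ltr_max _]addnC.
Qed.

Lemma max_gap_le i j : i <= j -> max_gap j <= max_gap i.
Proof.
apply: (homo_leq (r := fun a b => b <= a)) => [k|k l r le_lk le_rl|k].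
- exact: leqnn.
- exact: leq_trans le_rl le_lk.
- case: (ltnP k.+1 m) => [lt_km | le_mk].
    by rewrite (max_gapS lt_km) leq_pmulr ?expn_gt0.
  rewrite /max_gap /maxima_after.
  by have [-> ->] : m - k.+2 = 0 /\ m - k.+1 = 0 by lia.
Qed.

(* Between a maximum y and a later entry z, the quantity offset + max_gap grows
   by at most one per entry; the halving of the gap at each maximum pays for
   the increase of the offset there. *)
Lemma offset_run_le y z :
  ltr_max y -> max_gap y <= D + 1 -> y <= z -> z < m ->
  (forall x, y < x -> x <= z -> ~~ ltr_max x -> q x < q y) ->
  offset z + max_gap z <= offset y + D + 1 + (z - y).
Proof.
move=> max_y gap_y; elim: z => [|z IHz] le_yz lt_zm below_y.
  by move: le_yz gap_y; rewrite leqn0 => /eqP->; lia.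
case: (ltngtP y z.+1) le_yz => // [lt_yz | <-] _; last by lia.
have {}IHz := IHz lt_yz (ltnW lt_zm) (fun x lt_yx le_xz => below_y x lt_yx (leqW le_xz)).
have gapS := max_gapS lt_zm.
case max_z: (ltr_max z.+1) gapS => gapS.
  by rewrite [offset z.+1]offsetE max_z; rewrite expn1 in gapS; lia.
rewrite expn0 muln1 in gapS; rewrite -gapS.
suff : offset z.+1 <= offset y + D + 1 + (z.+1 - y) - max_gap z by lia.
rewrite [offset z.+1]offsetE max_z geq_max; apply/andP; split; first by lia.
apply/bigmax_leqP => u /andP[max_u lt_qu].
have lt_uy : u < y.
  by apply: ltr_max_ltn max_u (ltn_trans lt_qu _); apply: below_y; rewrite ?max_z.
have := offset_ltr_max max_y lt_uy; have := max_gap_le (ltnW lt_yz); lia.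
Qed.

Lemma offset_nonmax_ge x y :
  ltr_max x -> x < y -> ~~ ltr_max y -> q x < q y -> offset x + D + 1 <= offset y.
Proof.
case: y => // y max_x lt_xy nmax_y lt_q.
rewrite [offset y.+1]offsetE (negbTE nmax_y) leq_max; apply/orP; right.
exact: (leq_bigmax_cond (Ordinal lt_xy) (introT andP (conj max_x lt_q))).
Qed.

Lemma max_gap_le_pow y :
  2 <= m -> y < m -> ltr_max y -> max_gap y <= m * m ^ count ltr_max (iota 0 m).
Proof.
move=> ge2_m lt_ym max_y.
have lt_after : maxima_after y < count ltr_max (iota 0 m).
  have -> : iota 0 m = iota 0 y ++ y :: iota y.+1 (m - y.+1).
    by rewrite -[in LHS](subnKC (ltnW lt_ym)) iotaD -subnSK.
  by rewrite count_cat /= max_y /maxima_after; lia.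
rewrite /max_gap; apply: (@leq_trans (m * 2 ^ (maxima_after y).+1)).
  by rewrite expnS mulnA leq_mul2r; apply/orP; right; lia.
by rewrite leq_mul2l (leq_trans (leq_pexp2l _ lt_after)) ?leq_exp2r ?orbT //; lia.
Qed.

Definition position (n d i : nat) : nat := (if ltr_max i then d else 0) + offset i * n.

Definition height (n r i : nat) : nat := (if ltr_max i then D * n + r else 0) + offset i * n.

Lemma offset_mulSn n a b : a < b -> offset a * n + n <= offset b * n.
Proof. by move=> /offset_lt; rewrite -mulSnr leq_mul2r orbC => ->. Qed.

Lemma position_lt n d a b : d < n -> a < b -> position n d a < position n d b.
Proof. by move=> lt_dn /(offset_mulSn n); rewrite /position; case: ifP; case: ifP; nia. Qed.

Hypothesis q_inj : forall i j, i < m -> j < m -> q i = q j -> i = j.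
Hypothesis q_avoids321 : forall i j k, i < j -> j < k -> k < m -> ~~ (q k < q j < q i).

Lemma offset_nonmax_lt y x :
  ltr_max y -> max_gap y <= D + 1 -> y < x -> x < m -> ~~ ltr_max x -> q x < q y ->
  offset x < offset y + D.
Proof.
case: x => // x max_y gap_y lt_yx lt_xm nmax_x lt_q.
rewrite [offset x.+1]offsetE (negbTE nmax_x) gtn_max; apply/andP; split.
  have below_y z : y < z -> z <= x -> ~~ ltr_max z -> q z < q y.
    move=> lt_yz le_zx nmax_z; apply: ltn_trans _ lt_q.
    by apply: (nonmax_lt_later q_inj q_avoids321 nmax_z) lt_xm.
  have := offset_run_le max_y gap_y lt_yx (ltnW lt_xm) below_y.
  have := max_gap_ge x; lia.
suff : \max_(u < x.+1 | ltr_max u && (q u < q x.+1)) (offset u + D + 1) <= (offset y + D).-1.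
  by have := max_gap_ge y; lia.
apply/bigmax_leqP => u /andP[max_u lt_qu].
have lt_uy : u < y by apply: ltr_max_ltn max_u (ltn_trans lt_qu lt_q).
have := offset_ltr_max max_y lt_uy; have := max_gap_ge y; lia.
Qed.

Lemma height_lt n r a b :
  r < n -> (forall y, y < m -> ltr_max y -> max_gap y <= D + 1) ->
  a < m -> b < m -> q a < q b -> height n r a < height n r b.
Proof.
move=> lt_rn gap_le lt_am lt_bm lt_q; rewrite /height.
case max_a: (ltr_max a); case max_b: (ltr_max b) => /=.
- by have := offset_mulSn n (ltr_max_ltn max_a lt_q); nia.
- have := offset_nonmax_ge max_a (ltr_max_ltn max_a lt_q) (negbT max_b) lt_q.
  by move/(leq_mul (leqnn n)); nia.
- suff : offset a < offset b + D by move/(leq_mul (leqnn n)); nia.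
  case: (ltngtP a b) => [lt_ab | lt_ba | eq_ab].
  + by have := offset_lt lt_ab; lia.
  + exact: offset_nonmax_lt max_b (gap_le b lt_bm max_b) lt_ba lt_am (negbT max_a) lt_q.
  + by move: max_a max_b; rewrite eq_ab => ->.
- have := offset_mulSn n (nonmax_ltn q_inj q_avoids321 (negbT max_b) lt_am lt_q); nia.
Qed.

End Schedule.

Definition translation_equivariant (n : nat) (w : int -> int) : Prop :=
  forall i : int, w (i + n%:Z)%R = (w i + n%:Z)%R.

Lemma equivariant_mulD n w : translation_equivariant n w ->
  forall (i : int) (t : nat), w (i + (t * n)%:Z)%R = (w i + (t * n)%:Z)%R.
Proof.
move=> wD i t; elim: t i => [|t IHt] i; first by rewrite mul0n !addr0.
by rewrite mulSn PoszD addrA IHt wD -addrA.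
Qed.

Section PatternOfPerm.

Variables (m : nat) (p : 'S_m).

(* p as a function on nat, junk 0 outside 'I_m *)
Definition pval (i : nat) : nat := odflt 0 (omap (fun x : 'I_m => val (p x)) (insub i)).

Lemma pval_ord (x : 'I_m) : pval x = p x.
Proof. by rewrite /pval valK. Qed.

Lemma pval_inj i j : i < m -> j < m -> pval i = pval j -> i = j.
Proof.
move=> lt_im lt_jm; rewrite -[i]/(val (Ordinal lt_im)) -[j]/(val (Ordinal lt_jm)).
by rewrite !pval_ord => /val_inj/perm_inj ->.
Qed.

Lemma pval_avoids321 : avoids321 p ->
  forall i j k, i < j -> j < k -> k < m -> ~~ (pval k < pval j < pval i).
Proof.
move=> p321 i j k lt_ij lt_jk lt_km; apply/negP => /andP[lt_kj lt_ji]; apply: p321.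
have [lt_im lt_jm] : i < m /\ j < m by lia.
exists (Ordinal lt_im), (Ordinal lt_jm), (Ordinal lt_km).
by move: lt_kj lt_ji; rewrite -(pval_ord (Ordinal lt_im)) -(pval_ord (Ordinal lt_jm))
  -(pval_ord (Ordinal lt_km)).
Qed.

Lemma ltr_maxima_count : ltr_maxima p = count (ltr_max pval) (iota 0 m).
Proof.
rewrite /ltr_maxima -val_enum_ord count_map cardE size_filter -enumT.
apply: eq_count => j /=; rewrite inE; apply/forallP/allP => [max_j k | max_j i].
  rewrite mem_iota add0n => /andP[_ lt_kj]; have lt_km : k < m := ltn_trans lt_kj (ltn_ord j).
  by have := max_j (Ordinal lt_km); rewrite -!pval_ord /= lt_kj.
apply/implyP => lt_ij; have := max_j i; rewrite mem_iota lt_ij !pval_ord; exact.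
Qed.

End PatternOfPerm.

Lemma contains_of_jump m (p : 'S_m) n w (L : int) (d D r : nat) :
  2 <= m -> avoids321 p -> translation_equivariant n w ->
  0 < d < n -> r < n -> w (L + d%:Z)%R = (w L + (D * n + r)%:Z)%R ->
  m * m ^ ltr_maxima p <= D -> aff_contains p w.
Proof.
move=> ge2_m p321 wD /andP[d_gt0 lt_dn] lt_rn w_jump big_D.
set q := pval p.
have q_inj : forall i j, i < m -> j < m -> q i = q j -> i = j := @pval_inj m p.
have q321 : forall i j k, i < j -> j < k -> k < m -> ~~ (q k < q j < q i).
  exact: pval_avoids321.
have gap_le y : y < m -> ltr_max q y -> max_gap m q y <= D + 1.
  move=> lt_ym max_y; have := max_gap_le_pow ge2_m lt_ym max_y.
  by rewrite -ltr_maxima_count; lia.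
have w_position x :
    w (L + (position m q D n d x)%:Z)%R = (w L + (height m q D n r x)%:Z)%R.
  rewrite /position /height; case: ifP => _; last by rewrite !add0n equivariant_mulD.
  by rewrite PoszD addrA equivariant_mulD // w_jump -addrA -PoszD.
exists (fun x : 'I_m => (L + (position m q D n d x)%:Z)%R); split.
  by move=> a b lt_ab; rewrite ltrD2l ltz_nat position_lt.
move=> a b; rewrite !w_position ltrD2l ltz_nat -!pval_ord -/q.
have height_lt := height_lt q_inj q321 lt_rn gap_le.
case: (ltngtP (q a) (q b)) => [lt_q | lt_q | eq_q].
- exact: height_lt.
- by apply/negbTE; rewrite -leqNgt ltnW // height_lt.
- by rewrite (val_inj (q_inj _ _ (ltn_ord a) (ltn_ord b) eq_q)) ltnn.
Qed.

(* When the jump goes down, it is read as an upward jump from the translate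
   a + d - n of a + d to a. *)
Lemma contains_of_long_pair m (p : 'S_m) n w (a : int) (d : nat) :
  2 <= m -> avoids321 p -> translation_equivariant n w -> 0 < d < n ->
  m ^ (ltr_maxima p).+1 <= `|(w (a + d%:Z) - w a)%R|%N %/ n -> aff_contains p w.
Proof.
move=> ge2_m p321 wD /andP[d_gt0 lt_dn]; rewrite expnS.
set X := `|_|%N; have lt_rn : X %% n < n by rewrite ltn_pmod //; lia.
have X_div : X = X %/ n * n + X %% n := divn_eq X n.
have [le_w | lt_w] := lerP (w a) (w (a + d%:Z)%R).
  have X_eq : (Posz X = w (a + d%:Z) - w a)%R by rewrite gez0_abs // subr_ge0.
  apply: (contains_of_jump (L := a) (d := d) (D := X %/ n) (r := X %% n)) => //.
    by rewrite d_gt0.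
  by rewrite -X_div X_eq; ring.
have X_eq : (Posz X = w a - w (a + d%:Z))%R by rewrite /X -abszN opprB gez0_abs // subr_ge0 ltW.
move=> big_D; apply: (contains_of_jump (L := a + d%:Z - n%:Z) (d := n - d)
  (D := (X %/ n).+1) (r := X %% n)) => //; first by apply/andP; split; lia.
  have -> : (a + d%:Z - n%:Z + (n - d)%:Z)%R = a by rewrite -subzn 1?ltnW //; ring.
  have w_back : w (a + d%:Z - n%:Z)%R = (w (a + d%:Z) - n%:Z)%R.
    by rewrite -[in RHS](subrK n%:Z (a + d%:Z))%R wD addrK.
  by rewrite w_back mulSn -addnA -X_div PoszD X_eq; ring.
exact: leq_trans big_D (leqnSn _).
Qed.

Lemma diff_div_lt_of_avoids m (p : 'S_m) n w (a : int) (d : nat) :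
  2 <= m -> avoids321 p -> translation_equivariant n w -> aff_avoids p w -> 0 < d < n ->
  `|(w (a + d%:Z) - w a)%R|%N %/ n < m ^ (ltr_maxima p).+1.
Proof.
move=> ge2_m p321 wD w_avoids lt_d; rewrite ltnNge; apply/negP => big.
exact/w_avoids/(contains_of_long_pair ge2_m p321 wD lt_d big).
Qed.

Lemma sum_bool_le_size (P : pred nat) T (s : seq nat) :
  uniq s -> (forall t, t < T -> P t -> t \in s) -> \sum_(0 <= t < T) P t <= size s.
Proof.
move=> uniq_s sub_s.
have -> : \sum_(0 <= t < T) P t = count P (iota 0 T).
  by rewrite -sum1_count [RHS]big_mkcond /index_iota subn0.
rewrite -size_filter.
apply: uniq_leq_size; first exact/filter_uniq/iota_uniq.
by move=> t; rewrite mem_filter mem_iota add0n => /andP[Pt /sub_s]; apply.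
Qed.

Lemma sum_blocks (F : nat -> nat) n T :
  \sum_(0 <= j < T * n) F j = \sum_(0 <= t < T) \sum_(0 <= b < n) F (t * n + b).
Proof.
rewrite big_nat_mul; apply: eq_bigr => t _.
by rewrite -{1}[t * n]add0n big_addn mulSnr addKn; apply: eq_bigr => b _; rewrite addnC.
Qed.

Lemma sum_square_le_bin2 (H : nat -> nat -> nat) c n :
  (forall i, H i i = 0) -> (forall i j, i < j < n -> H i j + H j i <= c) ->
  \sum_(0 <= i < n) \sum_(0 <= j < n) H i j <= c * 'C(n, 2).
Proof.
elim: n => [|n IHn] H_diag H_pair; first by rewrite big_geq.
rewrite big_nat_recr //= big_nat_recr //= H_diag addn0 binS bin1 mulnDr.
under eq_bigr => i _ do rewrite big_nat_recr //=.
rewrite big_split /= -addnA leq_add //.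
  by apply: IHn => // i j /andP[lt_ij lt_jn]; apply: H_pair; rewrite lt_ij ltnW.
have -> : c * n = \sum_(0 <= i < n) c by rewrite sum_nat_const_nat subn0 mulnC.
rewrite -big_split /= big_nat_cond [X in _ <= X]big_nat_cond.
by apply: leq_sum => i /andP[/andP[_ lt_in] _]; apply: H_pair; rewrite lt_in /=.
Qed.

Section TranslateInversions.

Variables (n : nat) (w : int -> int).
Hypothesis wD : translation_equivariant n w.

Definition translate_inversions (i b T : nat) : nat :=
  \sum_(0 <= t < T) ((i < t * n + b) && (w (t * n + b)%:Z < w i%:Z)%R).

Lemma w_translate t b : w (t * n + b)%:Z = (w b%:Z + (t * n)%:Z)%R.
Proof. by rewrite addnC PoszD equivariant_mulD. Qed.

Lemma translate_inversions_diag i T : translate_inversions i i T = 0.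
Proof.
by rewrite /translate_inversions big1 // => t _; rewrite w_translate gtrDl ltz_nat andbF.
Qed.

Lemma translate_inversions_pair a b T c :
  0 < n -> a < b -> `|(w b%:Z - w a%:Z)%R|%N %/ n <= c ->
  translate_inversions a b T + translate_inversions b a T <= c.+1.
Proof.
move=> n_gt0 lt_ab; set X := `|_|%N => le_Xc.
have le_t t : t * n < X -> t <= c.
  by move=> lt_tX; apply: leq_trans le_Xc; rewrite leq_divRL // ltnW.
have [le_w | lt_w] := lerP (w a%:Z) (w b%:Z).
  have X_eq : (Posz X = w b%:Z - w a%:Z)%R by rewrite gez0_abs // subr_ge0.
  rewrite /translate_inversions big1 ?add0n => [|t _]; last first.
    by rewrite w_translate ltNge (le_trans le_w) ?andbF // lerDl.
  apply: leq_trans (leqnSn c); rewrite -[c](size_iota 1).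
  apply: sum_bool_le_size (iota_uniq 1 c) _ => t _ /andP[lt_bt].
  rewrite w_translate addrC -ltrBrDr -X_eq ltz_nat mem_iota => /le_t le_tc.
  by case: t lt_bt le_tc => [|t]; [rewrite add0n ltnNge ltnW | rewrite add1n ltnS].
have X_eq : (Posz X = w a%:Z - w b%:Z)%R.
  by rewrite /X -abszN opprB gez0_abs // subr_ge0 ltW.
rewrite [X in _ + X]/translate_inversions big1 ?addn0 => [|t _]; last first.
  by rewrite w_translate ltNge (le_trans (ltW lt_w)) ?andbF // lerDl.
rewrite -[c.+1](size_iota 0); apply: sum_bool_le_size (iota_uniq 0 c.+1) _ => t _.
by move=> /andP[_]; rewrite w_translate addrC -ltrBrDr -X_eq ltz_nat mem_iota => /le_t.
Qed.

(* Writing j = t n + b with 1 <= b <= n groups the inversions (i, j) by the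
   residue b of j. *)
Lemma inversions_le_translates i N : 0 < n ->
  \sum_(i.+1 <= j < N.+1) (w j%:Z < w i%:Z)%R
    <= \sum_(0 <= b < n) translate_inversions i b.+1 N.+1.
Proof.
move=> n_gt0; pose G j := (i < j) && (w j%:Z < w i%:Z)%R.
have -> : \sum_(i.+1 <= j < N.+1) (w j%:Z < w i%:Z)%R = \sum_(0 <= j < N.+1) G j.
  rewrite (@big_nat_widenl _ _ _ i.+1 0) // big_mkcond /=.
  by apply: eq_bigr => j _; rewrite /G; case: (i < j).
apply: (@leq_trans (\sum_(0 <= j < (N.+1 * n).+1) G j)).
  by rewrite (@big_cat_nat _ _ _ N.+1 0 (N.+1 * n).+1) //= ?leq_addr //; nia.
rewrite big_nat_recl // {1}/G ltn0 add0n (sum_blocks (fun j => G j.+1)) exchange_big_nat.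
by apply: leq_sum => b _; apply: leq_sum => t _; rewrite addnS.
Qed.

Lemma length_le_of_diff_le c : 0 < n ->
  (forall a b : nat, 1 <= a -> a < b -> b <= n -> `|(w b%:Z - w a%:Z)%R|%N %/ n <= c) ->
  length_le n w (c.+1 * 'C(n, 2)).
Proof.
move=> n_gt0 diff_le N; rewrite /inv_upto.
apply: (@leq_trans (\sum_(1 <= i < n.+1) \sum_(0 <= b < n) translate_inversions i b.+1 N.+1)).
  by apply: leq_sum => i _; apply: inversions_le_translates.
rewrite big_add1 /=; apply: sum_square_le_bin2 => [i | i j /andP[lt_ij lt_jn]].
  exact: translate_inversions_diag.
by apply: translate_inversions_pair; rewrite // diff_le.
Qed.

End TranslateInversions.

Theorem mainTheorem5 (m : nat) (p : 'S_m) (n : nat) (w : int -> int) :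
  (2 <= m)%N -> indecomposable p -> avoids321 p ->
  (2 <= n)%N -> affine_perm n w -> aff_avoids p w ->
  (forall a b : nat, (1 <= a)%N -> (a < b)%N -> (b <= n)%N ->
     (`|(w (Posz b) - w (Posz a))%R|%N %/ n <= m ^ (ltr_maxima p).+1 + 1)%N)
  /\ length_le n w ((m ^ (ltr_maxima p).+1 + 2) * 'C(n, 2)).
Proof.
move=> ge2_m _ p321 ge2_n [_ wD _] w_avoids.
have diff_le a b : 1 <= a -> a < b -> b <= n ->
    `|(w b%:Z - w a%:Z)%R|%N %/ n <= m ^ (ltr_maxima p).+1 + 1.
  move=> a_ge1 lt_ab le_bn; have lt_d : 0 < b - a < n by lia.
  have := diff_div_lt_of_avoids a%:Z ge2_m p321 wD w_avoids lt_d.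
  by rewrite -PoszD subnKC ?(ltnW lt_ab); lia.
split=> //; rewrite (_ : _ + 2 = (m ^ (ltr_maxima p).+1 + 1).+1); last by lia.
exact: (length_le_of_diff_le wD (ltnW ge2_n) diff_le).
Qed.
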